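(* Let $G$ be a $4$-connected simple graph on seven vertices. Then $G$ does not contain $W_6$ as a minor if and only if $G$ has no vertex of degree $6$.
   Context: $W_6$ is the wheel obtained by joining a single new vertex to all vertices of a cycle of length $6$. A minor is obtained by a sequence of edge deletions and edge contractions (parallel edges arising from contractions are reduced to single edges). *)

(* Simple graphs on a finType T are symmetric irreflexive
   boolean relations e : rel T. *)
From mathcomp Require Import all_boot.
Set Implicit Arguments. Unset Strict Implicit. Unset Printing Implicit Defensive.

Definition connected_in (T : finType) (e : rel T) (A : {set T}) : Prop :=
  forall x y, x \in A -> y \in A ->
    connect (fun u v => [&& u \in A, v \in A & e u v]) x y.

Definition k_connected (T : finType) (e : rel T) (k : nat) : Prop :=
  k < #|T| /\ forall S : {set T}, #|S| < k -> connected_in e (~: S).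

Definition degree (T : finType) (e : rel T) (x : T) : nat := #|[set y | e x y]|.

Definition has_minor (T : finType) (e : rel T) (S : finType) (h : rel S) : Prop :=
  exists B : S -> {set T},
    [/\ forall s, B s != set0,
        forall s t, s != t -> [disjoint B s & B t],
        forall s, connected_in e (B s) &
        forall s t, h s t -> exists x y, [/\ x \in B s, y \in B t & e x y]].

(* The wheel W_6: hub 0, rim vertices 1..6 forming the cycle 1-2-3-4-5-6-1. *)
Definition wheel6 : rel 'I_7 := fun i j =>
  (i != j) &&
  [|| (val i == 0), (val j == 0),
      ((val i + 6 - val j) %% 6 == 1) | ((val j + 6 - val i) %% 6 == 1)].

From mathcomp Require Import all_boot zify.

(* A W_6 minor of a graph on seven vertices has singleton branch sets, so it
   is a spanning wheel subgraph and its hub has degree 6.  Conversely, let x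
   have degree 6.  A 4-connected graph has minimum degree 4, so G - x is a
   graph on six vertices of minimum degree 3; by Dirac's theorem (checked here
   for six vertices by enumerating all 2^15 graphs) it has a Hamiltonian
   cycle, which together with the hub x forms a W_6. *)

Set Implicit Arguments.
Unset Strict Implicit.
Unset Printing Implicit Defensive.

Section Graphs.

Variables (T : finType) (e : rel T).
Hypothesis irr_e : irreflexive e.

Lemma degree_full (x : T) :
  degree e x = #|T|.-1 <-> forall y, y != x -> e x y.
Proof.
have sub_nbhd : [set y | e x y] \subset [set~ x].
  by apply/subsetP => y; rewrite !inE; apply: contraTneq => ->; rewrite irr_e.
rewrite /degree -(cardsC1 x); split=> [deg_x y ne_yx | full_x].
  by have := subset_cardP deg_x sub_nbhd y; rewrite !inE ne_yx.
apply: eq_card => y; rewrite !inE.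
by case: eqVneq => [->|/full_x ->]; rewrite ?irr_e.
Qed.

Lemma k_connected_degree k : k_connected e k -> forall v, k <= degree e v.
Proof.
move=> [lt_kT conn] v; rewrite leqNgt; apply/negP => lt_deg.
set N := [set y | e v y].
have v_out : v \in ~: N by rewrite !inE irr_e.
have [w] : exists w, w \in ~: N :\ v.
  apply/card_gt0P; have := cardsC N; have := cardsD1 v (~: N).
  by move: lt_kT lt_deg; rewrite v_out /degree -/N; lia.
case/setD1P => ne_wv w_out.
case/connectP: (conn N lt_deg v w v_out w_out) => [[|u p]] /=.
  by move=> _ eq_wv; rewrite eq_wv eqxx in ne_wv.
by rewrite !inE => /andP[/and3P[_ /negP u_out /u_out]].
Qed.

Section Minors.

Variables (S : finType) (h : rel S).

Lemma has_minor_of_embedding (f : S -> T) :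
  injective f -> {homo f : s t / h s t >-> e s t} -> has_minor e h.
Proof.
move=> inj_f hom_f; exists (fun s => [set f s]); split.
- by move=> s; apply/set0Pn; exists (f s); rewrite inE.
- by move=> s t ne_st; rewrite disjoints1 inE (inj_eq inj_f).
- by move=> s x y /set1P -> /set1P ->; apply: connect0.
- by move=> s t h_st; exists (f s), (f t); rewrite !inE !eqxx hom_f.
Qed.

Lemma embedding_of_has_minor :
  #|T| <= #|S| -> has_minor e h ->
  exists2 f : S -> T, injective f & {homo f : s t / h s t >-> e s t}.
Proof.
move=> le_TS [B [B_neq0 B_disj _ B_edge]].
have B_uniq s t x : x \in B s -> x \in B t -> s = t.
  by case: (eqVneq s t) => // /B_disj /disjointFr B_st /B_st ->.
have B_inhab s : exists x, x \in B s by apply/set0Pn.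
pose f s := xchoose (B_inhab s).
have f_in s : f s \in B s := xchooseP (B_inhab s).
have inj_f : injective f.
  by move=> s t eq_f; apply: (B_uniq _ _ (f s)); rewrite // eq_f.
have B_f s x : x \in B s -> x = f s.
  have /codomP[t ->] := inj_card_onto inj_f le_TS x.
  by move=> /(B_uniq _ _ _ (f_in t)) ->.
exists f => // s t /B_edge[x [y [x_in y_in e_xy]]].
by rewrite -(B_f _ _ x_in) -(B_f _ _ y_in).
Qed.

End Minors.

End Graphs.

Fixpoint sublists {A : Type} (s : seq A) : seq (seq A) :=
  if s is x :: s' then [seq x :: t | t <- sublists s'] ++ sublists s'
  else [:: [::]].

Lemma mem_sublists_filter (A : eqType) (a : pred A) (s : seq A) :
  filter a s \in sublists s.
Proof.
by elim: s => [|x s IHs] //=; case: (a x); rewrite mem_cat ?map_f ?IHs ?orbT.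
Qed.

Definition adjacency (E : seq (nat * nat)) : seq (seq bool) :=
  foldr (fun p M => set_nth [::] M p.1 (set_nth false (nth [::] M p.1) p.2 true))
    [::] E.

Lemma adjacencyE E i j : nth false (nth [::] (adjacency E) i) j = ((i, j) \in E).
Proof.
elim: E => [|[a b] E IHE] /=; first by rewrite !nth_nil.
rewrite !nth_set_nth /= in_cons xpair_eqE -IHE.
by case: eqP => [->|_] /=; rewrite ?nth_set_nth /=; case: (j == b).
Qed.

(* Binding [M] outside the [fun] makes [vm_compute] build the table once. *)
Definition rel_of_edges (E : seq (nat * nat)) : rel nat :=
  let M := adjacency (E ++ [seq (p.2, p.1) | p <- E]) in
  fun i j => nth false (nth [::] M i) j.

Lemma rel_of_edgesE E i j : rel_of_edges E i j = ((i, j) \in E) || ((j, i) \in E).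
Proof.
rewrite /rel_of_edges adjacencyE mem_cat; congr (_ || _).
by apply/mapP/idP => [[[a b] ? [-> ->]] | ?] //; exists (j, i).
Qed.

Definition upper_pairs : seq (nat * nat) :=
  [seq (i, j) | i <- iota 0 6, j <- iota i.+1 (5 - i)].

Lemma mem_upper_pairs i j : ((i, j) \in upper_pairs) = (i < j < 6).
Proof.
apply/allpairsPdep/idP => [[a [b [a_in b_in [-> ->]]]] | /andP[lt_ij lt_j6]].
  by move: a_in b_in; rewrite !mem_iota; lia.
by exists i, j; rewrite !mem_iota; split=> //; lia.
Qed.

Definition min_degree3 (r : rel nat) : bool :=
  all (fun i => 3 <= count (r i) (iota 0 6)) (iota 0 6).

Definition cycles6 : seq (seq nat) := [seq 0 :: p | p <- permutations (iota 1 5)].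

Definition hamiltonian6 (r : rel nat) : bool := has (cycle r) cycles6.

Lemma cycles6_perm p : p \in cycles6 -> perm_eq p (iota 0 6).
Proof.
by case/mapP => q q_perm ->; rewrite (perm_cons 0 q (iota 1 5)) -mem_permutations.
Qed.

(* An [if] rather than [==>]: [vm_compute] is call-by-value, and this way the
   search for a Hamiltonian cycle runs only when the degree condition holds. *)
Lemma min_degree3_hamiltonian6_check :
  all (fun E => let r := rel_of_edges E in
               if min_degree3 r then hamiltonian6 r else true)
    (sublists upper_pairs).
Proof. by vm_compute. Qed.

Lemma min_degree3_hamiltonian6 (r : rel nat) :
  symmetric r -> irreflexive r -> min_degree3 r -> hamiltonian6 r.
Proof.
move=> sym_r irr_r.
set E := [seq p <- upper_pairs | r p.1 p.2].
have r_E : {in iota 0 6 &, r =2 rel_of_edges E}.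
  move=> i j; rewrite !mem_iota /= => lt_i6 lt_j6.
  rewrite rel_of_edgesE !mem_filter !mem_upper_pairs /= lt_i6 lt_j6 !andbT.
  rewrite (sym_r j i).
  by case: ltngtP => [_|_|->]; rewrite ?andbT ?andbF ?orbF ?irr_r.
have -> : min_degree3 r = min_degree3 (rel_of_edges E).
  apply: eq_in_all => i i_in; congr (_ <= _).
  by apply: eq_in_count => j j_in; apply: r_E i j i_in j_in.
have -> : hamiltonian6 r = hamiltonian6 (rel_of_edges E).
  apply: eq_in_has => p /cycles6_perm /perm_mem p_iota; apply: (eq_in_cycle r_E).
  by apply/allP => i; rewrite p_iota.
have := allP min_degree3_hamiltonian6_check E (mem_sublists_filter _ _).
by rewrite /=; case: min_degree3.
Qed.

Lemma hamiltonian_cycle6 (T : finType) (e : rel T) (A : {set T}) :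
  symmetric e -> irreflexive e -> #|A| = 6 ->
  {in A, forall v, 3 <= #|A :&: [set w | e v w]|} ->
  exists c : seq T, [/\ uniq c, c =i A & cycle e c].
Proof.
move=> sym_e irr_e card_A deg_A.
have [x0 _] : exists x0, x0 \in A by apply/card_gt0P; rewrite card_A.
set s := enum A; have size_s : size s = 6 by rewrite -cardE.
have s_iota : map (nth x0 s) (iota 0 6) = s.
  by rewrite -size_s -[RHS](mkseq_nth x0).
have /hasP[p p_cyc cyc_p] : hamiltonian6 (relpre (nth x0 s) e).
  apply: min_degree3_hamiltonian6 => [i j | i |]; [exact: sym_e | exact: irr_e |].
  apply/allP => i; rewrite mem_iota => lt_i6.
  have v_in : nth x0 s i \in A by rewrite -mem_enum mem_nth ?size_s.
  apply: leq_trans (deg_A _ v_in) _; rewrite -count_map s_iota.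
  rewrite cardE (perm_size (enum_setI _ _)) size_filter.
  by apply/eq_leq/eq_count => w; rewrite inE.
have p_iota := cycles6_perm p_cyc.
exists (map (nth x0 s) p); split.
- rewrite map_inj_in_uniq ?(perm_uniq p_iota) ?iota_uniq //.
  move=> i j; rewrite !(perm_mem p_iota) !mem_iota => lt_i6 lt_j6 /eqP.
  by rewrite nth_uniq ?size_s ?enum_uniq // => /eqP.
- by move=> x; rewrite (perm_mem (perm_map _ p_iota)) s_iota mem_enum.
- by rewrite cycle_map.
Qed.

Lemma wheel6_hub (i : 'I_7) : i != ord0 -> wheel6 ord0 i.
Proof. by rewrite /wheel6 eq_sym => ->. Qed.

Definition wheel_map (T : Type) (x : T) (c : seq T) (i : 'I_7) : T :=
  if val i is n.+1 then nth x c n else x.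

Lemma wheel_map_inj (T : eqType) (x : T) (c : seq T) :
  size c = 6 -> uniq (x :: c) -> injective (wheel_map x c).
Proof.
rewrite cons_uniq => size_c /andP[x_notin_c uniq_c].
have rim_neq_hub n : n < 6 -> nth x c n != x.
  by move=> lt_n6; apply: contraNneq x_notin_c => <-; rewrite mem_nth ?size_c.
move=> [[|m] lt_m7] [[|n] lt_n7]; rewrite /wheel_map /= => eq_mn.
all: apply: val_inj => //=.
- by have := rim_neq_hub n lt_n7; rewrite -eq_mn eqxx.
- by have := rim_neq_hub m lt_m7; rewrite eq_mn eqxx.
- by move/eqP: eq_mn; rewrite nth_uniq ?size_c // => /eqP ->.
Qed.

Lemma wheel_map_homo (T : eqType) (e : rel T) (x : T) (c : seq T) :
  symmetric e -> size c = 6 -> {in c, forall y, e x y} -> cycle e c ->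
  {homo wheel_map x c : i j / wheel6 i j >-> e i j}.
Proof.
move=> sym_e.
case: c => [|c0 [|c1 [|c2 [|c3 [|c4 [|c5 [|? ?]]]]]]] // _ hub_c.
rewrite /= !andbT => /and5P[e01 e12 e23 e34 /andP[e45 e50]].
have [h0 h1 h2] : [/\ e x c0, e x c1 & e x c2].
  by split; apply: hub_c; rewrite !inE eqxx ?orbT.
have [h3 h4 h5] : [/\ e x c3, e x c4 & e x c5].
  by split; apply: hub_c; rewrite !inE eqxx ?orbT.
move=> i j; rewrite /wheel6 /wheel_map -val_eqE.
case: i => [[|[|[|[|[|[|[|i]]]]]]] lt_i7] //;
  case: j => [[|[|[|[|[|[|[|j]]]]]]] lt_j7] //=.
all: by move=> _; first [done | rewrite sym_e].
Qed.

Lemma wheel6_minor_of_degree6 (T : finType) (e : rel T) (x : T) :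
  symmetric e -> irreflexive e -> #|T| = 7 -> (forall v, 4 <= degree e v) ->
  degree e x = 6 -> has_minor e wheel6.
Proof.
move=> sym_e irr_e card_T deg_ge4 deg_x.
have hub_x : forall y, y != x -> e x y by apply/degree_full; rewrite // card_T.
have card_rim : #|[set~ x]| = 6 by rewrite cardsC1 card_T.
have [|c [uniq_c mem_c cyc_c]] := hamiltonian_cycle6 sym_e irr_e card_rim.
  move=> v _; rewrite -ltnS setIC -setDE.
  apply: leq_trans (deg_ge4 v) _.
  by rewrite /degree (cardsD1 x) -add1n leq_add2r leq_b1.
have size_c : size c = 6 by rewrite -(card_uniqP uniq_c) (eq_card mem_c).
apply: (has_minor_of_embedding (wheel_map_inj (x := x) size_c _)).
- by rewrite /= uniq_c mem_c !inE eqxx.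
- apply: wheel_map_homo => // y; rewrite mem_c !inE; exact: hub_x.
Qed.

Lemma degree6_of_wheel6_minor (T : finType) (e : rel T) :
  irreflexive e -> #|T| = 7 -> has_minor e wheel6 -> exists x, degree e x = 6.
Proof.
move=> irr_e card_T minor_e.
have card_7 : #|T| <= #|'I_7| by rewrite card_ord card_T.
have [f inj_f homo_f] := embedding_of_has_minor card_7 minor_e.
exists (f ord0).
suff /(degree_full irr_e) : forall y, y != f ord0 -> e (f ord0) y.
  by rewrite card_T.
move=> y; case/codomP: (inj_card_onto inj_f card_7 y) => i ->.
by rewrite (inj_eq inj_f) => /wheel6_hub /homo_f.
Qed.

Theorem lemma4p4 (T : finType) (e : rel T) :
  symmetric e -> irreflexive e -> #|T| = 7 -> k_connected e 4 ->
  (~ has_minor e wheel6 <-> ~ (exists x : T, degree e x = 6)).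
Proof.
move=> sym_e irr_e card_T conn_e; split=> [no_minor [x deg_x] | no_hub minor_e].
- apply: no_minor; apply: (wheel6_minor_of_degree6 sym_e irr_e card_T _ deg_x).
  exact: k_connected_degree.
- exact/no_hub/(degree6_of_wheel6_minor irr_e card_T).
Qed.
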